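(* Suppose Assumption 1 holds, $f$ is convex, $F$ is $\mu$-optimal-set-strongly convex for some $\mu>0$, every $d^k$ in Algorithm 1 satisfies the $\eta$-inexactness condition for a fixed $\eta\in[0,1)$, and $\sigma I\preceq H_k\preceq MI$ for all $k$, for some $M\ge\sigma>0$. Then for all $k=0,1,2,\dots$, $$\frac{F(x^{k+1})-F^*}{F(x^k)-F^*}\le1-\frac{\alpha_k\gamma(1-\eta)\mu}{\mu+\|H_k\|}\le1-\frac{\gamma\mu}{\mu+M}\min\left\{1-\eta,\ \frac{2(1-\sqrt\eta)\beta(1-\gamma)\sigma}{L}\right\}.$$ Moreover, for every $k$ with $F(x^k)-F^*\ge(x^k-P_\Omega(x^k))^TH_k(x^k-P_\Omega(x^k))$, one also has $$\frac{F(x^{k+1})-F^*}{F(x^k)-F^*}\le1-\frac{(1-\eta)\gamma\alpha_k}{2}\le1-\frac\gamma2\min\left\{1-\eta,\ \frac{2(1-\sqrt\eta)\beta(1-\gamma)\sigma}{L}\right\}.$$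
   Context: Problem setting: $F(x)=f(x)+\psi(x)$ on $\mathbb{R}^n$, $F^*=\inf F$, $\Omega=\{x:F(x)=F^*\}$, $P_\Omega$ the Euclidean projection onto $\Omega$, $\|\cdot\|$ the Euclidean / spectral norm. Assumption 1: $f$ is differentiable with $L$-Lipschitz continuous gradient ($L>0$); $\psi:\mathbb{R}^n\to\mathbb{R}\cup\{+\infty\}$ is convex, proper and closed; $F$ is bounded below; $\Omega$ is nonempty. $F$ is $\mu$-optimal-set-strongly convex ($\mu\ge0$) if for all $x$ and all $\lambda\in[0,1]$: $F(\lambda x+(1-\lambda)P_\Omega(x))\le\lambda F(x)+(1-\lambda)F^*-\frac{\mu\lambda(1-\lambda)}2\|x-P_\Omega(x)\|^2$. For $x\in\mathbb{R}^n$ and symmetric $H$, $Q^x_H(d)\coloneqq\nabla f(x)^Td+\frac12d^THd+\psi(x+d)-\psi(x)$, $Q^*=\inf_dQ^x_H(d)$; $d$ satisfies the $\eta$-inexactness condition if $Q^x_H(d)\le(1-\eta)Q^*$. Algorithm 1: given $\beta,\gamma\in(0,1)$, $x^0$, fixed $\eta\in[0,1)$; for $k=0,1,\dots$: choose symmetric $H_k$ with $Q_k\coloneqq Q^{x^k}_{H_k}$ strongly convex; compute $d^k$ satisfying the $\eta$-inexactness condition for $Q_k$; let $\Delta_k=\nabla f(x^k)^Td^k+\psi(x^k+d^k)-\psi(x^k)$; let $\alpha_k=\beta^i$ for the smallest nonnegative integer $i$ with $F(x^k+\alpha_kd^k)\le F(x^k)+\alpha_k\gamma\Delta_k$; set $x^{k+1}=x^k+\alpha_kd^k$.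 *)

From Stdlib Require Import Reals ClassicalEpsilon.
From mathcomp Require Import ssreflect ssrfun ssrbool eqtype ssrnat seq fintype bigop.
Open Scope R_scope.

Definition vec (n : nat) := 'I_n -> R.
Definition mat (n : nat) := 'I_n -> 'I_n -> R.

Definition vadd {n} (u v : vec n) : vec n := fun i => u i + v i.
Definition vsub {n} (u v : vec n) : vec n := fun i => u i - v i.
Definition vscal {n} (a : R) (u : vec n) : vec n := fun i => a * u i.
Definition dot {n} (u v : vec n) : R := \big[Rplus/0]_(i < n) (u i * v i).
Definition vnorm {n} (u : vec n) : R := sqrt (dot u u).
Definition mulmv {n} (H : mat n) (v : vec n) : vec n :=
  fun i => \big[Rplus/0]_(j < n) (H i j * v j).
Definition quad {n} (H : mat n) (v : vec n) : R := dot v (mulmv H v).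
Definition mat_symmetric {n} (H : mat n) : Prop := forall i j, H i j = H j i.

Definition opnorm {n} (H : mat n) : R :=
  epsilon (inhabits 0)
    (fun c => is_lub (fun r => exists v : vec n, vnorm v <= 1 /\ r = vnorm (mulmv H v)) c).

Inductive ER := ERf (r : R) | ERinf.
Definition ERle (a b : ER) : Prop :=
  match a, b with
  | _, ERinf => True
  | ERinf, ERf _ => False
  | ERf x, ERf y => x <= y
  end.
Definition ERlt_r (c : R) (b : ER) : Prop :=
  match b with ERf y => c < y | ERinf => True end.
Definition ERadd (a b : ER) : ER :=
  match a, b with ERf x, ERf y => ERf (x + y) | _, _ => ERinf end.
Definition ERaddr (a : ER) (r : R) : ER := ERadd a (ERf r).
Definition ERscale (r : R) (a : ER) : ER :=
  match a with ERf x => ERf (r * x) | ERinf => ERinf end.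

Definition ext_convex {n} (psi : vec n -> ER) : Prop :=
  forall (x y : vec n) (a b lam : R), psi x = ERf a -> psi y = ERf b -> 0 <= lam <= 1 ->
    ERle (psi (vadd (vscal lam x) (vscal (1 - lam) y))) (ERf (lam * a + (1 - lam) * b)).
Definition ext_proper {n} (psi : vec n -> ER) : Prop := exists x r, psi x = ERf r.
Definition ext_closed {n} (psi : vec n -> ER) : Prop :=
  forall (x : vec n) (c : R), ERlt_r c (psi x) ->
    exists delta, 0 < delta /\ forall y, vnorm (vsub y x) < delta -> ERlt_r c (psi y).

Definition is_gradient {n} (f : vec n -> R) (g : vec n -> vec n) : Prop :=
  forall x eps, 0 < eps -> exists delta, 0 < delta /\
    forall h, vnorm h < delta -> Rabs (f (vadd x h) - f x - dot (g x) h) <= eps * vnorm h.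
Definition lipschitz_grad {n} (g : vec n -> vec n) (L : R) : Prop :=
  forall x y, vnorm (vsub (g x) (g y)) <= L * vnorm (vsub x y).
Definition convex_fun {n} (f : vec n -> R) : Prop :=
  forall x y lam, 0 <= lam <= 1 ->
    f (vadd (vscal lam x) (vscal (1 - lam) y)) <= lam * f x + (1 - lam) * f y.

Definition Fsum {n} (f : vec n -> R) (psi : vec n -> ER) (x : vec n) : ER :=
  ERaddr (psi x) (f x).

Definition is_inf_ER {n} (Q : vec n -> ER) (m : R) : Prop :=
  (forall d, ERle (ERf m) (Q d)) /\
  (forall b, (forall d, ERle (ERf b) (Q d)) -> b <= m).

Definition is_proj_onto {n} (Om : vec n -> Prop) (P : vec n -> vec n) : Prop :=
  forall x, Om (P x) /\ forall y, Om y -> vnorm (vsub x (P x)) <= vnorm (vsub x y).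

Definition opt_set_strongly_convex {n} (F : vec n -> ER) (Fstar : R)
    (P : vec n -> vec n) (mu : R) : Prop :=
  forall x lam Fx, F x = ERf Fx -> 0 <= lam <= 1 ->
    ERle (F (vadd (vscal lam x) (vscal (1 - lam) (P x))))
      (ERf (lam * Fx + (1 - lam) * Fstar
            - mu * lam * (1 - lam) / 2 * (vnorm (vsub x (P x))) ^ 2)).

(** psi(x+d) - psi(x) (psi(x) finite along the iterates). *)
Definition psidiff {n} (psi : vec n -> ER) (x d : vec n) : ER :=
  match psi x with ERf p => ERaddr (psi (vadd x d)) (- p) | ERinf => ERinf end.
Definition Qmodel {n} (g : vec n -> vec n) (psi : vec n -> ER) (H : mat n) (x d : vec n) : ER :=
  ERaddr (psidiff psi x d) (dot (g x) d + / 2 * quad H d).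
Definition Delta {n} (g : vec n -> vec n) (psi : vec n -> ER) (x d : vec n) : ER :=
  ERaddr (psidiff psi x d) (dot (g x) d).
Definition eta_inexact {n} (g : vec n -> vec n) (psi : vec n -> ER) (H : mat n)
    (x : vec n) (eta : R) (d : vec n) : Prop :=
  exists Qs, is_inf_ER (Qmodel g psi H x) Qs /\ ERle (Qmodel g psi H x d) (ERf ((1 - eta) * Qs)).

Definition ls_cond {n} (f : vec n -> R) (g : vec n -> vec n) (psi : vec n -> ER)
    (beta gamma : R) (x d : vec n) (j : nat) : Prop :=
  ERle (Fsum f psi (vadd x (vscal (pow beta j) d)))
       (ERadd (Fsum f psi x) (ERscale (pow beta j * gamma) (Delta g psi x d))).
Definition armijo_step {n} (f : vec n -> R) (g : vec n -> vec n) (psi : vec n -> ER)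
    (beta gamma : R) (x d : vec n) (alpha : R) : Prop :=
  exists i : nat, alpha = pow beta i /\ ls_cond f g psi beta gamma x d i /\
    forall j : nat, (j < i)%nat -> ~ ls_cond f g psi beta gamma x d j.

Definition cmin (eta beta gamma sigma L : R) : R :=
  Rmin (1 - eta) (2 * (1 - sqrt eta) * beta * (1 - gamma) * sigma / L).

(* An eta-inexact direction still decreases the model by a definite amount: convexity of psi
   along t |-> t d gives Q^* <= t Delta + t^2 d'Hd / 2 for t in [0, 1], which together with
   Delta + d'Hd / 2 <= (1 - eta) Q^* forces Delta <= - d'Hd / (1 + sqrt eta).  By the descent
   lemma every step shorter than 2 (1 - gamma) sigma / (L (1 + sqrt eta)) passes the Armijo
   test, so backtracking stops with alpha (1 - eta) >= min {1 - eta, 2 (1 - sqrt eta) beta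
   (1 - gamma) sigma / L}, and the accepted step satisfies
   F(x+) - F^* <= F(x) - F^* + alpha gamma (1 - eta) Q^*.
   Finally Q^* is bounded by evaluating the model at l (P x - x): optimal-set strong convexity
   and the gradient inequality for f give
   Q^* <= - l (F(x) - F^* ) - mu l (1 - l) |x - P x|^2 / 2 + l^2 (x - P x)'H(x - P x) / 2,
   and the two rates come from l = mu / (mu + |H|) and from l = 1. *)

From Pilot Require Import Defs.
From Stdlib Require Import Reals Lra Psatz FunctionalExtensionality ClassicalEpsilon.
From HB Require Import structures.
From mathcomp Require Import ssreflect ssrfun ssrbool eqtype ssrnat seq fintype bigop.
Open Scope R_scope.

HB.instance Definition _ :=
  Monoid.isComLaw.Build R 0 Rplus (fun x y z => esym (Rplus_assoc x y z)) Rplus_comm Rplus_0_l.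
HB.instance Definition _ := Monoid.isMulLaw.Build R 0 Rmult Rmult_0_l Rmult_0_r.
HB.instance Definition _ :=
  Monoid.isAddLaw.Build R Rmult Rplus Rmult_plus_distr_r Rmult_plus_distr_l.

Section Euclidean.
Context {n : nat}.
Implicit Types (u v w : vec n) (H : mat n).

Lemma dotC u v : dot u v = dot v u.
Proof. by apply: eq_bigr => i _; rewrite Rmult_comm. Qed.

Lemma dotDl u v w : dot (vadd u v) w = dot u w + dot v w.
Proof. by rewrite /dot -big_split; apply: eq_bigr => i _; rewrite /vadd Rmult_plus_distr_r. Qed.

Lemma dotZl c u w : dot (vscal c u) w = c * dot u w.
Proof. by rewrite /dot big_distrr; apply: eq_bigr => i _; rewrite /vscal Rmult_assoc. Qed.

Lemma dotBl u v w : dot (vsub u v) w = dot u w - dot v w.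
Proof.
have -> : vsub u v = vadd u (vscal (-1) v).
  by apply: functional_extensionality => i; rewrite /vsub /vadd /vscal; ring.
by rewrite dotDl dotZl; ring.
Qed.

Lemma dotDr u v w : dot w (vadd u v) = dot w u + dot w v.
Proof. by rewrite dotC dotDl !(dotC w). Qed.

Lemma dotZr c u w : dot w (vscal c u) = c * dot w u.
Proof. by rewrite dotC dotZl dotC. Qed.

Lemma dot_ge0 u : 0 <= dot u u.
Proof. by apply: big_ind => [|a b|i _]; [lra|lra|nra]. Qed.

Lemma vnorm0 : vnorm (fun _ : 'I_n => 0) = 0.
Proof. by rewrite /vnorm /dot big1 ?sqrt_0 // => i _; ring. Qed.

Lemma vnorm_ge0 u : 0 <= vnorm u.
Proof. exact: sqrt_pos. Qed.

Lemma vnorm_sqr u : vnorm u ^ 2 = dot u u.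
Proof. by rewrite /vnorm pow2_sqrt //; apply: dot_ge0. Qed.

Lemma vnormZ c u : vnorm (vscal c u) = Rabs c * vnorm u.
Proof.
rewrite /vnorm dotZl dotZr -Rmult_assoc sqrt_mult; last exact: dot_ge0; last nra.
by rewrite -/(Rsqr c) sqrt_Rsqr_abs.
Qed.

Lemma vadd_line (x h : vec n) t s :
  vadd x (vscal (t + s) h) = vadd (vadd x (vscal t h)) (vscal s h).
Proof. by apply: functional_extensionality => i; rewrite /vadd /vscal; ring. Qed.

Lemma vadd_line0 (x h : vec n) : vadd x (vscal 0 h) = x.
Proof. by apply: functional_extensionality => i; rewrite /vadd /vscal; ring. Qed.

Lemma mulmvD H u v : mulmv H (vadd u v) = vadd (mulmv H u) (mulmv H v).
Proof.
apply: functional_extensionality => i; rewrite /mulmv /vadd -big_split.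
by apply: eq_bigr => j _; rewrite Rmult_plus_distr_l.
Qed.

Lemma mulmvZ H c u : mulmv H (vscal c u) = vscal c (mulmv H u).
Proof.
apply: functional_extensionality => i; rewrite /mulmv /vscal big_distrr.
by apply: eq_bigr => j _ /=; ring.
Qed.

Lemma dot_mulmvC H u v : mat_symmetric H -> dot u (mulmv H v) = dot v (mulmv H u).
Proof.
move=> symH; rewrite /dot /mulmv.
under eq_bigr do rewrite big_distrr.
under [RHS]eq_bigr do rewrite big_distrr.
rewrite exchange_big; apply: eq_bigr => j _; apply: eq_bigr => i _.
by rewrite /= symH; ring.
Qed.

Lemma quadZ H c u : quad H (vscal c u) = c ^ 2 * quad H u.
Proof. by rewrite /quad mulmvZ dotZl dotZr; ring. Qed.

Lemma quad_line H u v t : mat_symmetric H ->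
  quad H (vadd u (vscal t v)) = quad H u + 2 * t * dot u (mulmv H v) + t ^ 2 * quad H v.
Proof.
move=> symH; rewrite /quad mulmvD mulmvZ dotDl !dotDr !dotZl !dotZr.
by rewrite (dot_mulmvC _ v u symH); ring.
Qed.

End Euclidean.

Lemma discriminant_le a b c : 0 <= c ->
  (forall t, 0 <= a + 2 * t * b + t ^ 2 * c) -> b ^ 2 <= a * c.
Proof.
move=> c_ge0 nonneg.
have [c0 | c_gt0] := Req_dec c 0; last first.
  have := nonneg (- b / c).
  have -> : a + 2 * (- b / c) * b + (- b / c) ^ 2 * c = (a * c - b ^ 2) / c by field.
  move=> h; have := Rmult_le_compat_r c _ _ c_ge0 h.
  by rewrite /Rdiv Rmult_assoc Rinv_l // Rmult_0_l; lra.
have [b0 | b_neq0] := Req_dec b 0; first by rewrite b0 c0; lra.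
have := nonneg (- (a + 1) / (2 * b)).
have -> : 2 * (- (a + 1) / (2 * b)) * b = - (a + 1) by field.
by rewrite c0; lra.
Qed.

Lemma dot_le_vnorm {n} (u v : vec n) : dot u v <= vnorm u * vnorm v.
Proof.
have cs : dot u v ^ 2 <= vnorm u ^ 2 * vnorm v ^ 2.
  rewrite !vnorm_sqr; apply: discriminant_le; first exact: dot_ge0.
  move=> t; have := dot_ge0 (vadd u (vscal t v)).
  by rewrite dotDl !dotDr !dotZl !dotZr (dotC v u); lra.
have := Rmult_le_pos _ _ (vnorm_ge0 u) (vnorm_ge0 v); nra.
Qed.

Lemma vnorm_mulmv_le {n} {H : mat n} {M : R} : mat_symmetric H -> 0 <= M ->
  (forall v, 0 <= quad H v <= M * vnorm v ^ 2) ->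
  forall v, vnorm (mulmv H v) <= M * vnorm v.
Proof.
move=> symH M_ge0 quadH v; set u := mulmv H v.
(* Cauchy-Schwarz for the semi-inner product (a, b) |-> a . H b *)
have cs : dot u (mulmv H v) ^ 2 <= quad H u * quad H v.
  apply: discriminant_le; first by case: (quadH v).
  by move=> t; rewrite -quad_line //; case: (quadH (vadd u (vscal t v))).
rewrite -vnorm_sqr in cs.
have : quad H u * quad H v <= (M * vnorm u ^ 2) * (M * vnorm v ^ 2).
  by case: (quadH u); case: (quadH v) => *; apply: Rmult_le_compat.
have := vnorm_ge0 u; have := vnorm_ge0 v => v_ge0 u_ge0 bound.
have Mv_ge0 : 0 <= M * vnorm v by apply: Rmult_le_pos.
have [u0 | u_neq0] := Req_dec (vnorm u) 0; first by lra.
apply: Rsqr_incr_0_var => //; rewrite /Rsqr.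
apply: (Rmult_le_reg_l (vnorm u ^ 2)); first by apply: pow_lt; lra.
nra.
Qed.

Section OperatorNorm.
Context {n : nat} {H : mat n} {M : R}.
Hypotheses (M_ge0 : 0 <= M) (mulmv_bound : forall v, vnorm (mulmv H v) <= M * vnorm v).

Let image_of_ball r := exists v : vec n, vnorm v <= 1 /\ r = vnorm (mulmv H v).

Lemma opnorm_is_lub : is_lub image_of_ball (opnorm H).
Proof.
apply: epsilon_spec.
have ball0 : image_of_ball (vnorm (mulmv H (fun _ => 0))).
  by exists (fun _ => 0); split => //; rewrite vnorm0; lra.
have bounded : bound image_of_ball.
  by exists M => r [v [v_le1 ->]]; have := mulmv_bound v; have := vnorm_ge0 v; nra.
have [m m_lub] := completeness image_of_ball bounded (ex_intro _ _ ball0).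
by exists m.
Qed.

Lemma opnorm_ge0 : 0 <= opnorm H.
Proof.
apply: Rle_trans (vnorm_ge0 (mulmv H (fun _ => 0))) _.
by apply: (proj1 opnorm_is_lub); exists (fun _ => 0); split => //; rewrite vnorm0; lra.
Qed.

Lemma opnorm_le : opnorm H <= M.
Proof.
apply: (proj2 opnorm_is_lub) => r [v [v_le1 ->]].
by have := mulmv_bound v; have := vnorm_ge0 v; nra.
Qed.

Lemma vnorm_mulmv_le_opnorm v : vnorm (mulmv H v) <= opnorm H * vnorm v.
Proof.
have [v0 | v_neq0] := Req_dec (vnorm v) 0.
  by have := mulmv_bound v; rewrite v0 Rmult_0_r Rmult_0_r.
have v_gt0 : 0 < vnorm v by have := vnorm_ge0 v; lra.
have unit_v : image_of_ball (vnorm (mulmv H (vscal (/ vnorm v) v))).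
  exists (vscal (/ vnorm v) v); split => //.
  by rewrite vnormZ Rabs_right ?Rinv_l; [lra | lra | apply/Rle_ge/Rlt_le/Rinv_0_lt_compat].
have := proj1 opnorm_is_lub _ unit_v.
rewrite mulmvZ vnormZ Rabs_right; last by apply/Rle_ge/Rlt_le/Rinv_0_lt_compat.
move=> le_opnorm.
have := Rmult_le_compat_r _ _ _ (Rlt_le _ _ v_gt0) le_opnorm.
by rewrite Rmult_comm -Rmult_assoc Rinv_r_simpl_r; lra.
Qed.

Lemma quad_le_opnorm v : quad H v <= opnorm H * vnorm v ^ 2.
Proof.
have := dot_le_vnorm v (mulmv H v); have := vnorm_mulmv_le_opnorm v.
rewrite /quad; have := vnorm_ge0 v; nra.
Qed.

End OperatorNorm.

Lemma derivable_pt_lim_le_slope (phi : R -> R) l C :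
  derivable_pt_lim phi 0 l -> (forall s, 0 < s <= 1 -> phi s - phi 0 <= s * C) -> l <= C.
Proof.
move=> dphi slope; apply: Rnot_lt_le => C_lt_l.
have [del near0] := dphi (l - C) ltac:(lra).
set s := Rmin (del / 2) 1.
have del_gt0 := cond_pos del.
have s_gt0 : 0 < s by apply: Rmin_pos; lra.
have s_le1 : s <= 1 := Rmin_r _ _.
have s_le_del : s <= del / 2 := Rmin_l _ _.
have s_small : Rabs s < del by rewrite Rabs_right; lra.
have := near0 s (Rgt_not_eq _ _ s_gt0) s_small.
rewrite Rplus_0_l => /Rabs_def2 [_ lower].
have := slope s (conj s_gt0 s_le1); rewrite (Rmult_comm s C).
have -> : phi s - phi 0 = (phi s - phi 0) / s * s by field; lra.
move=> /(Rmult_le_reg_r _ _ _ s_gt0); lra.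
Qed.

Section Gradient.
Context {n : nat} {f : vec n -> R} {g : vec n -> vec n}.
Hypothesis grad_f : is_gradient f g.

Lemma derivable_pt_lim_line x h t :
  derivable_pt_lim (fun t => f (vadd x (vscal t h))) t (dot (g (vadd x (vscal t h))) h).
Proof.
move=> eps eps_gt0; set y := vadd x (vscal t h); set K := vnorm h + 1.
have h_lt_K : vnorm h < K by rewrite /K; lra.
have K_gt0 : 0 < K by have := vnorm_ge0 h; lra.
have [del [del_gt0 approx]] := grad_f y (eps / K) ltac:(apply: Rdiv_lt_0_compat; lra).
have delK_gt0 : 0 < del / K by apply: Rdiv_lt_0_compat.
exists (mkposreal _ delK_gt0) => s s_neq0 /= s_small.
have s_gt0 : 0 < Rabs s by apply: Rabs_pos_lt.
have shift_small : vnorm (vscal s h) < del.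
  have -> : del = del / K * K by field; lra.
  rewrite vnormZ; have := vnorm_ge0 h; nra.
have := approx _ shift_small; rewrite -vadd_line -/y dotZr vnormZ => err.
have -> : (f (vadd x (vscal (t + s) h)) - f y) / s - dot (g y) h =
          (f (vadd x (vscal (t + s) h)) - f y - s * dot (g y) h) * / s by field.
rewrite Rabs_mult Rabs_inv.
apply: (Rmult_lt_reg_r (Rabs s)) => //; rewrite Rmult_assoc Rinv_l; last lra.
have : eps / K * (Rabs s * vnorm h) < eps * Rabs s.
  have -> : eps / K * (Rabs s * vnorm h) = eps * Rabs s * (vnorm h / K) by field; lra.
  rewrite -{2}(Rmult_1_r (eps * Rabs s)); apply: Rmult_lt_compat_l; first nra.
  by apply: (Rmult_lt_reg_r K) => //; rewrite /Rdiv Rmult_assoc Rinv_l; lra.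
lra.
Qed.

Lemma convex_gradient_ineq x y : convex_fun f -> f x + dot (g x) (vsub y x) <= f y.
Proof.
move=> convex_f; set h := vsub y x.
suff : dot (g x) h <= f y - f x by lra.
have := derivable_pt_lim_line x h 0; rewrite vadd_line0 => dphi.
apply: (derivable_pt_lim_le_slope _ _ _ dphi) => s s01.
have -> : vadd x (vscal s h) = vadd (vscal s y) (vscal (1 - s) x).
  by apply: functional_extensionality => i; rewrite /vadd /vscal /h /vsub; ring.
rewrite vadd_line0; have := convex_f y x s ltac:(lra); lra.
Qed.

Lemma descent_lemma L x h t : lipschitz_grad g L -> 0 <= t ->
  f (vadd x (vscal t h)) <= f x + t * dot (g x) h + L / 2 * t ^ 2 * vnorm h ^ 2.
Proof.
move=> lip_g t_ge0.
have [t_gt0 | <-] := Rle_lt_or_eq_dec 0 t t_ge0; last by rewrite vadd_line0; lra.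
set a := dot (g x) h; set b := L / 2 * vnorm h ^ 2.
(* mean value theorem for phi(c) = f(x + c h) - a c - b c^2, whose derivative is <= 0 *)
have dphi c : 0 <= c <= t ->
  derivable_pt_lim ((fun c => f (vadd x (vscal c h))) - mult_real_fct a id
                    - mult_real_fct b (fun c => c ^ 2))%F c
    (dot (g (vadd x (vscal c h))) h - a * 1 - b * (INR 2 * c ^ Nat.pred 2)).
  move=> _; apply: derivable_pt_lim_minus; first apply: derivable_pt_lim_minus.
  - exact: derivable_pt_lim_line.
  - by apply: derivable_pt_lim_scal; apply: derivable_pt_lim_id.
  - by apply: derivable_pt_lim_scal; apply: derivable_pt_lim_pow.
have [c [mvt c_in]] := MVT_cor2 _ _ _ _ t_gt0 dphi.
move: mvt; rewrite /minus_fct /mult_real_fct /id vadd_line0 /=.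
have gradient_growth : dot (g (vadd x (vscal c h))) h - a <= L * c * vnorm h ^ 2.
  rewrite /a -dotBl; apply: Rle_trans (dot_le_vnorm _ _) _.
  have := lip_g (vadd x (vscal c h)) x.
  have -> : vsub (vadd x (vscal c h)) x = vscal c h.
    by apply: functional_extensionality => i; rewrite /vsub /vadd /vscal; ring.
  rewrite vnormZ Rabs_right; last lra.
  have := vnorm_ge0 h; have := vnorm_ge0 (vsub (g (vadd x (vscal c h))) (g x)); nra.
rewrite /b; nra.
Qed.

End Gradient.

Lemma exact_model_decrease Qs D A : 0 <= A ->
  (forall l, 0 <= l <= 1 -> Qs <= l * D + l ^ 2 * A / 2) ->
  D + A / 2 <= Qs -> D <= - A.
Proof.
move=> A_ge0 model_le exact; apply: Rnot_lt_le => D_gt.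
have := model_le 0 ltac:(lra); rewrite /= !Rmult_0_l => Qs_le0.
have A_gt0 : 0 < A by lra.
have l_in : 0 <= - D / A <= 1.
  split; first by apply: Rmult_le_pos; [lra | apply/Rlt_le/Rinv_0_lt_compat].
  by apply: (Rmult_le_reg_r A) => //; rewrite /Rdiv Rmult_assoc Rinv_l; lra.
have := model_le _ l_in.
have -> : - D / A * D + (- D / A) ^ 2 * A / 2 = - (D * D) / (2 * A) by field; lra.
move=> Qs_le.
have : (D + A) ^ 2 <= 0.
  have -> : (D + A) ^ 2 = 2 * A * (D + A / 2 + D * D / (2 * A)) by field; lra.
  have : D + A / 2 + D * D / (2 * A) <= 0 by rewrite /Rdiv Ropp_mult_distr_l in Qs_le; lra.
  nra.
nra.
Qed.

Lemma inexact_model_decrease Qs D A eta : 0 <= eta < 1 -> 0 <= A ->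
  (forall l, 0 <= l <= 1 -> Qs <= l * D + l ^ 2 * A / 2) ->
  D + A / 2 <= (1 - eta) * Qs -> D <= - A / (1 + sqrt eta).
Proof.
move=> eta01 A_ge0 model_le inexact.
set s := sqrt eta.
have ss : s * s = eta by rewrite /s sqrt_sqrt; lra.
have [s_gt0 | s0] := Rle_lt_or_eq_dec 0 s (sqrt_pos eta); last first.
  rewrite -s0 Rplus_0_r Rdiv_1_r; rewrite -ss -s0 Rmult_0_l Rminus_0_r Rmult_1_l in inexact.
  exact: exact_model_decrease model_le inexact.
(* with l = 1/(1 + sqrt eta) the factor 1 - eta = (1 - s)(1 + s) cancels *)
have l_in : 0 <= / (1 + s) <= 1.
  split; first by apply/Rlt_le/Rinv_0_lt_compat; lra.
  by rewrite -Rinv_1; apply: Rinv_le_contravar; lra.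
have := Rmult_le_compat_l (1 - eta) _ _ ltac:(lra) (model_le _ l_in).
have -> : (1 - eta) * (/ (1 + s) * D + (/ (1 + s)) ^ 2 * A / 2) =
          (1 - s) * D + (1 - s) * A / (2 * (1 + s)) by rewrite -ss; field; lra.
move=> Qs_le.
apply: (Rmult_le_reg_l s) => //.
have -> : s * (- A / (1 + s)) = (1 - s) * A / (2 * (1 + s)) - A / 2 by field; lra.
lra.
Qed.

Section InexactStep.
Context {n : nat} {f : vec n -> R} {g : vec n -> vec n} {psi : vec n -> ER}.
Context {L beta gamma eta sigma : R} {H : mat n} {x d : vec n} {p : R}.
Hypotheses (grad_f : is_gradient f g) (lip_g : lipschitz_grad g L) (L_gt0 : 0 < L).
Hypotheses (convex_psi : ext_convex psi) (psi_x : psi x = ERf p).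
Hypotheses (beta01 : 0 < beta < 1) (gamma01 : 0 < gamma < 1) (eta01 : 0 <= eta < 1).
Hypothesis (quad_ge0 : forall v, 0 <= quad H v).

Lemma Qmodel_ERf {v : vec n} {q : R} : psi (vadd x v) = ERf q ->
  Qmodel g psi H x v = ERf (q - p + (dot (g x) v + / 2 * quad H v)).
Proof. by move=> psi_xv; rewrite /Qmodel /psidiff psi_x psi_xv. Qed.

Lemma segment_point l v : vadd (vscal l (vadd x v)) (vscal (1 - l) x) = vadd x (vscal l v).
Proof. by apply: functional_extensionality => i; rewrite /vadd /vscal; ring. Qed.

Lemma inexact_direction_decrease : eta_inexact g psi H x eta d ->
  exists pd Qs, psi (vadd x d) = ERf pd /\ is_inf_ER (Qmodel g psi H x) Qs /\
   pd - p + dot (g x) d + quad H d / 2 <= (1 - eta) * Qs /\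
   pd - p + dot (g x) d <= - quad H d / (1 + sqrt eta).
Proof.
move=> [Qs [Qs_inf inexact]]; have [Qs_le _] := Qs_inf.
case psi_xd: (psi (vadd x d)) inexact => [pd|]; last by rewrite /Qmodel /psidiff psi_x psi_xd.
rewrite (Qmodel_ERf psi_xd) /= => inexact.
have inexact' : pd - p + dot (g x) d + quad H d / 2 <= (1 - eta) * Qs by lra.
exists pd, Qs; do 3!split => //.
apply: (inexact_model_decrease Qs) => // l l01.
have := convex_psi _ _ _ _ l psi_xd psi_x l01; rewrite segment_point.
case psi_xl: (psi (vadd x (vscal l d))) => [q|] //= psi_convex.
have := Qs_le (vscal l d); rewrite (Qmodel_ERf psi_xl) /= quadZ dotZr; nra.
Qed.

Lemma ls_cond_ERf pd j : psi (vadd x d) = ERf pd ->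
  ls_cond f g psi beta gamma x d j <->
  exists q, psi (vadd x (vscal (beta ^ j) d)) = ERf q /\
    q + f (vadd x (vscal (beta ^ j) d)) <= p + f x + beta ^ j * gamma * (pd - p + dot (g x) d).
Proof.
move=> psi_xd; rewrite /ls_cond /Fsum /Defs.Delta /psidiff psi_x /= psi_xd /=.
case: (psi (vadd x (vscal (beta ^ j) d))) => [q|] /=; last by split => // [[q []]].
by split => [le | [_ [[<-] le]]]; [exists q; split => //|]; lra.
Qed.

Hypothesis (quad_d : sigma * vnorm d ^ 2 <= quad H d).

Lemma armijo_accepts_short_steps {pd : R} a : psi (vadd x d) = ERf pd ->
  pd - p + dot (g x) d <= - quad H d / (1 + sqrt eta) ->
  0 < a <= 1 -> a <= 2 * (1 - gamma) * sigma / (L * (1 + sqrt eta)) ->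
  exists q, psi (vadd x (vscal a d)) = ERf q /\
    q + f (vadd x (vscal a d)) <= p + f x + a * gamma * (pd - p + dot (g x) d).
Proof.
set s := sqrt eta; set D := pd - p + dot (g x) d.
move=> psi_xd decrease a01 a_small.
have s_ge0 : 0 <= s := sqrt_pos eta.
have := convex_psi _ _ _ _ a psi_xd psi_x ltac:(lra); rewrite segment_point.
case psi_xa: (psi (vadd x (vscal a d))) => [q|] //= psi_convex.
exists q; split => //.
have := descent_lemma grad_f L x d a lip_g (Rlt_le _ _ (proj1 a01)).
have curvature : L * a / 2 <= (1 - gamma) / (1 + s) * sigma.
  have -> : (1 - gamma) / (1 + s) * sigma = L / 2 * (2 * (1 - gamma) * sigma / (L * (1 + s))).
    by field; lra.
  have : L / 2 * a <= L / 2 * (2 * (1 - gamma) * sigma / (L * (1 + s))).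
    by apply: Rmult_le_compat_l; lra.
  lra.
have -> : L / 2 * a ^ 2 * vnorm d ^ 2 = a * (L * a / 2 * vnorm d ^ 2) by field.
have step_small : L * a / 2 * vnorm d ^ 2 <= (1 - gamma) * - D.
  have d2_ge0 := pow2_ge_0 (vnorm d).
  have : - D >= quad H d / (1 + s) by rewrite /Rdiv -Ropp_mult_distr_l in decrease; lra.
  have : (1 - gamma) / (1 + s) * sigma * vnorm d ^ 2 <= (1 - gamma) * (quad H d / (1 + s)).
    have -> : (1 - gamma) / (1 + s) * sigma * vnorm d ^ 2 =
              (1 - gamma) * ((sigma * vnorm d ^ 2) / (1 + s)) by field; lra.
    apply: Rmult_le_compat_l; first lra.
    by apply: Rmult_le_compat_r; [apply/Rlt_le/Rinv_0_lt_compat; lra | ].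
  nra.
have := Rmult_le_compat_l a _ _ (Rlt_le _ _ (proj1 a01)) step_small.
rewrite /D; nra.
Qed.

Lemma armijo_step_size_bound {pd alpha : R} : psi (vadd x d) = ERf pd ->
  pd - p + dot (g x) d <= - quad H d / (1 + sqrt eta) ->
  armijo_step f g psi beta gamma x d alpha ->
  0 < alpha <= 1 /\ cmin eta beta gamma sigma L <= alpha * (1 - eta) /\
  exists q, psi (vadd x (vscal alpha d)) = ERf q /\
    q + f (vadd x (vscal alpha d)) <= p + f x + alpha * gamma * (pd - p + dot (g x) d).
Proof.
move=> psi_xd decrease [i [-> [accepted rejected]]].
have beta_pow j : 0 < beta ^ j <= 1.
  by split; [apply: pow_lt; lra | rewrite -(pow1 j); apply: pow_incr; lra].
set s := sqrt eta; set tau := 2 * (1 - gamma) * sigma / (L * (1 + s)).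
have s01 : 0 <= s < 1 by split; [exact: sqrt_pos | rewrite -sqrt_1; apply: sqrt_lt_1; lra].
have eta_s : 1 - eta = (1 - s) * (1 + s) by rewrite /s -{1}(sqrt_sqrt eta); lra.
split; first exact: beta_pow.
split; last exact: (ls_cond_ERf _ i psi_xd).1 accepted.
case: i rejected {accepted} => [|i] rejected.
  by apply: Rle_trans (Rmin_l _ _) _; rewrite /=; lra.
have tau_lt : tau < beta ^ i.
  apply: Rnot_le_lt => short; apply: (rejected i (ltnSn i)).
  exact/(ls_cond_ERf _ i psi_xd)/(armijo_accepts_short_steps _ psi_xd decrease (beta_pow i) short).
apply: Rle_trans (Rmin_r _ _) _.
have -> : 2 * (1 - s) * beta * (1 - gamma) * sigma / L = beta * (1 - s) * (1 + s) * tau.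
  by rewrite /tau; field; lra.
rewrite eta_s /=.
have : 0 <= beta * (1 - s) * (1 + s) by apply: Rmult_le_pos; nra.
nra.
Qed.

Lemma model_inf_le_opt_gap {Fstar : R} {P : vec n -> vec n} {mu Qs : R} l : convex_fun f ->
  opt_set_strongly_convex (Fsum f psi) Fstar P mu ->
  is_inf_ER (Qmodel g psi H x) Qs -> 0 <= l <= 1 ->
  Qs <= - l * (p + f x - Fstar) - mu * l * (1 - l) / 2 * vnorm (vsub x (P x)) ^ 2
        + l ^ 2 / 2 * quad H (vsub x (P x)).
Proof.
move=> convex_f strong_F [Qs_le _] l01.
(* compare with the model at the step towards the projection, z - x = - l (x - P x) *)
set z := vadd (vscal (1 - l) x) (vscal (1 - (1 - l)) (P x)).
have := strong_F x (1 - l) (p + f x) ltac:(by rewrite /Fsum psi_x) ltac:(lra).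
rewrite -/z /Fsum; case psi_z: (psi z) => [qz|] //= strong_z.
have z_x : vsub z x = vscal (- l) (vsub x (P x)).
  by apply: functional_extensionality => i; rewrite /z /vsub /vadd /vscal; ring.
have psi_xz : psi (vadd x (vsub z x)) = ERf qz.
  by rewrite -psi_z; congr psi; apply: functional_extensionality => i; rewrite /vadd /vsub; ring.
have := Qs_le (vsub z x); rewrite (Qmodel_ERf psi_xz) /=.
have := convex_gradient_ineq grad_f x z convex_f.
rewrite z_x quadZ; nra.
Qed.

End InexactStep.

Lemma opt_gap_linear_bound {Qs E mu N r Qx : R} : 0 < mu -> 0 <= N -> Qx <= N * r ^ 2 ->
  (forall l, 0 <= l <= 1 -> Qs <= - l * E - mu * l * (1 - l) / 2 * r ^ 2 + l ^ 2 / 2 * Qx) ->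
  Qs <= - (mu / (mu + N)) * E.
Proof.
move=> mu_gt0 N_ge0 Qx_le model_le.
set l := mu / (mu + N).
(* at l = mu / (mu + N) the strong convexity gain cancels the curvature term *)
have l_in : 0 <= l <= 1.
  split; first by apply/Rlt_le/Rdiv_lt_0_compat; lra.
  by apply: (Rmult_le_reg_r (mu + N)); [lra | rewrite /l /Rdiv Rmult_assoc Rinv_l; lra].
have := model_le l l_in.
have : l ^ 2 / 2 * Qx <= l ^ 2 / 2 * (N * r ^ 2) by apply: Rmult_le_compat_l; nra.
have -> : l ^ 2 / 2 * (N * r ^ 2) = mu * l * (1 - l) / 2 * r ^ 2 by rewrite /l; field; lra.
lra.
Qed.

Lemma contraction_factors_le {alpha gamma eta mu N M c : R} :
  0 < alpha <= 1 -> 0 < gamma < 1 -> 0 <= eta < 1 -> 0 < mu -> 0 <= N -> N <= M ->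
  c <= alpha * (1 - eta) ->
  1 - alpha * gamma * (1 - eta) * mu / (mu + N) <= 1 - gamma * mu / (mu + M) * c /\
  1 - (1 - eta) * gamma * alpha / 2 <= 1 - gamma / 2 * c.
Proof.
move=> alpha01 gamma01 eta01 mu_gt0 N_ge0 N_le_M c_le.
split; last by have := Rmult_le_compat_l (gamma / 2) _ _ ltac:(lra) c_le; lra.
have le_factor : gamma * mu / (mu + M) <= gamma * mu / (mu + N).
  by apply: Rmult_le_compat_l; [nra | apply: Rinv_le_contravar; lra].
have factor_ge0 : 0 <= gamma * mu / (mu + M).
  by apply: Rmult_le_pos; [nra | apply/Rlt_le/Rinv_0_lt_compat; lra].
have -> : alpha * gamma * (1 - eta) * mu / (mu + N) =
          gamma * mu / (mu + N) * (alpha * (1 - eta)) by field; lra.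
have := Rmult_le_compat_l _ _ _ factor_ge0 c_le.
have := Rmult_le_compat_r (alpha * (1 - eta)) _ _ ltac:(nra) le_factor.
lra.
Qed.

Lemma inexact_proximal_newton_step {n} {f : vec n -> R} {g} {psi : vec n -> ER}
    {L Fstar P mu eta beta gamma sigma M x H d alpha p} :
  0 < L -> is_gradient f g -> lipschitz_grad g L -> ext_convex psi ->
  convex_fun f -> 0 < mu -> opt_set_strongly_convex (Fsum f psi) Fstar P mu ->
  0 < beta < 1 -> 0 < gamma < 1 -> 0 <= eta < 1 ->
  psi x = ERf p -> mat_symmetric H -> 0 < sigma -> sigma <= M ->
  (forall v, sigma * vnorm v ^ 2 <= quad H v <= M * vnorm v ^ 2) ->
  eta_inexact g psi H x eta d -> armijo_step f g psi beta gamma x d alpha ->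
  exists q, psi (vadd x (vscal alpha d)) = ERf q /\
   let Fk := p + f x in let Fk1 := q + f (vadd x (vscal alpha d)) in
    Fk1 - Fstar <= (1 - alpha * gamma * (1 - eta) * mu / (mu + opnorm H)) * (Fk - Fstar) /\
    1 - alpha * gamma * (1 - eta) * mu / (mu + opnorm H)
      <= 1 - gamma * mu / (mu + M) * cmin eta beta gamma sigma L /\
    (quad H (vsub x (P x)) <= Fk - Fstar ->
       Fk1 - Fstar <= (1 - (1 - eta) * gamma * alpha / 2) * (Fk - Fstar) /\
       1 - (1 - eta) * gamma * alpha / 2 <= 1 - gamma / 2 * cmin eta beta gamma sigma L).
Proof.
move=> L_gt0 grad_f lip_g convex_psi convex_f mu_gt0 strong_F beta01 gamma01 eta01
  psi_x symH sigma_gt0 sigma_le_M quadH inexact armijo.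
have quad_ge0 v : 0 <= quad H v by have := quadH v; have := pow2_ge_0 (vnorm v); nra.
have [pd [Qs [psi_xd [Qs_inf [model_d decrease]]]]] :=
  inexact_direction_decrease convex_psi psi_x eta01 quad_ge0 inexact.
have [alpha01 [cmin_le [q [psi_next armijo_decrease]]]] :=
  armijo_step_size_bound grad_f lip_g L_gt0 convex_psi psi_x beta01 gamma01 eta01
    (proj1 (quadH d)) psi_xd decrease armijo.
exists q; split => //; cbv zeta.
have M_ge0 : 0 <= M by lra.
have mulmv_bound := vnorm_mulmv_le symH M_ge0
  (fun v => conj (quad_ge0 v) (proj2 (quadH v))).
have N_ge0 := opnorm_ge0 M_ge0 mulmv_bound.
have N_le_M := opnorm_le M_ge0 mulmv_bound.
have opt_gap l := model_inf_le_opt_gap grad_f psi_x l convex_f strong_F Qs_inf.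
have rate_ge0 : 0 <= alpha * gamma * (1 - eta) by apply: Rmult_le_pos; nra.
have [factor_lin factor_quad] :=
  contraction_factors_le alpha01 gamma01 eta01 mu_gt0 N_ge0 N_le_M cmin_le.
have sufficient : q + f (vadd x (vscal alpha d)) - Fstar <=
                   p + f x - Fstar + alpha * gamma * (1 - eta) * Qs.
  have Delta_le : pd - p + dot (g x) d <= (1 - eta) * Qs by have := quad_ge0 d; lra.
  have := Rmult_le_compat_l (alpha * gamma) _ _ ltac:(nra) Delta_le; nra.
split.
  have := opt_gap_linear_bound mu_gt0 N_ge0 (quad_le_opnorm M_ge0 mulmv_bound _) opt_gap.
  move=> /(Rmult_le_compat_l _ _ _ rate_ge0).
  have -> : alpha * gamma * (1 - eta) * mu / (mu + opnorm H) =
            alpha * gamma * (1 - eta) * (mu / (mu + opnorm H)) by field; lra.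
  nra.
split => // quad_le_gap; split => //.
have : Qs <= - (p + f x - Fstar) / 2 by have := opt_gap 1 ltac:(lra); lra.
move=> /(Rmult_le_compat_l _ _ _ rate_ge0); nra.
Qed.

Theorem theorem2 (n : nat) (f : vec n -> R) (gradf : vec n -> vec n) (psi : vec n -> ER)
  (L Fstar : R) (P : vec n -> vec n) (mu eta beta gamma sigma M : R)
  (x : nat -> vec n) (H : nat -> mat n) (d : nat -> vec n) (alpha : nat -> R) :
  (* Assumption 1 *)
  0 < L -> is_gradient f gradf -> lipschitz_grad gradf L ->
  ext_convex psi -> ext_proper psi -> ext_closed psi ->
  (exists b, forall y, ERle (ERf b) (Fsum f psi y)) ->
  is_inf_ER (Fsum f psi) Fstar ->
  (exists y, Fsum f psi y = ERf Fstar) ->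
  is_proj_onto (fun y => Fsum f psi y = ERf Fstar) P ->
  (* further hypotheses *)
  convex_fun f ->
  0 < mu -> opt_set_strongly_convex (Fsum f psi) Fstar P mu ->
  (* Algorithm 1 *)
  0 < beta < 1 -> 0 < gamma < 1 -> 0 <= eta < 1 ->
  (exists p, psi (x 0%nat) = ERf p) ->
  (forall k, mat_symmetric (H k)) ->
  0 < sigma -> sigma <= M ->
  (forall k v, sigma * (vnorm v) ^ 2 <= quad (H k) v <= M * (vnorm v) ^ 2) ->
  (forall k, eta_inexact gradf psi (H k) (x k) eta (d k)) ->
  (forall k, armijo_step f gradf psi beta gamma (x k) (d k) (alpha k)) ->
  (forall k, x (S k) = vadd (x k) (vscal (alpha k) (d k))) ->
  forall k : nat, exists Fk Fk1 : R,
    Fsum f psi (x k) = ERf Fk /\ Fsum f psi (x (S k)) = ERf Fk1 /\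
    Fk1 - Fstar <= (1 - alpha k * gamma * (1 - eta) * mu / (mu + opnorm (H k))) * (Fk - Fstar) /\
    1 - alpha k * gamma * (1 - eta) * mu / (mu + opnorm (H k))
      <= 1 - gamma * mu / (mu + M) * cmin eta beta gamma sigma L /\
    (quad (H k) (vsub (x k) (P (x k))) <= Fk - Fstar ->
       Fk1 - Fstar <= (1 - (1 - eta) * gamma * alpha k / 2) * (Fk - Fstar) /\
       1 - (1 - eta) * gamma * alpha k / 2 <= 1 - gamma / 2 * cmin eta beta gamma sigma L).
Proof.
move=> L_gt0 grad_f lip_g convex_psi _ _ _ _ _ _ convex_f mu_gt0 strong_F beta01 gamma01
  eta01 [p0 psi_x0] symH sigma_gt0 sigma_le_M quadH inexact armijo iterate.
have step k p (psi_xk : psi (x k) = ERf p) :=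
  inexact_proximal_newton_step L_gt0 grad_f lip_g convex_psi convex_f mu_gt0 strong_F beta01
    gamma01 eta01 psi_xk (symH k) sigma_gt0 sigma_le_M (quadH k) (inexact k) (armijo k).
have psi_finite k : exists p, psi (x k) = ERf p.
  elim: k => [|k [p psi_xk]]; first by exists p0.
  by have [q [psi_next _]] := step k p psi_xk; exists q; rewrite iterate.
move=> k; have [p psi_xk] := psi_finite k.
have [q [psi_next rates]] := step k p psi_xk.
exists (p + f (x k)), (q + f (x k.+1)).
by rewrite /Fsum psi_xk iterate psi_next; do 2!split => //; exact: rates.
Qed.
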